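(* Let $M\ge K\ge 2$ be integers and $P_u>0$. Define $$R_{\mathrm{ZF,UL}}=K\log_2\!\left(1+P_u(M-K+1)\right),\qquad R_{\mathrm{MRC,UL}}=K\log_2\!\left(1+\frac{P_uM}{P_u(K-1)+1}\right).$$ Then $R_{\mathrm{ZF,UL}}\ge R_{\mathrm{MRC,UL}}$ if and only if $P_u\ge P_{\mathrm{th,UL}}:=\dfrac{1}{M-K+1}$.
   Context: In the paper, $R_{\mathrm{ZF,UL}}$ and $R_{\mathrm{MRC,UL}}$ are the closed-form low-SNR expressions for the ergodic uplink sum rate of a system with $M$ base-station antennas and $K$ single-antenna users each transmitting with power $P_u$ (i.i.d. Rayleigh channel, unit noise variance), using a zero-forcing receive filter and maximum ratio combining, respectively; the lemma states that ZF gives the better sum rate exactly when the per-user power exceeds $P_{\mathrm{th,UL}}$. *)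

From Stdlib Require Import Reals.
Open Scope R_scope.

Definition log2 (x : R) : R := ln x / ln 2.

Definition R_ZF_UL (M K : nat) (Pu : R) : R :=
  INR K * log2 (1 + Pu * (INR M - INR K + 1)).

Definition R_MRC_UL (M K : nat) (Pu : R) : R :=
  INR K * log2 (1 + Pu * INR M / (Pu * (INR K - 1) + 1)).

Definition P_th_UL (M K : nat) : R := 1 / (INR M - INR K + 1).

(* Both rates carry the same factor K / ln 2, so ZF wins iff its SINR 1 + Pu d
   (with d = M - K + 1) dominates the MRC one, where M = d + k and k = K - 1.
   Their difference is Pu k (Pu d - 1) / (Pu k + 1), whose sign is that of
   Pu d - 1. *)

From Stdlib Require Import Reals Lra Psatz.
Open Scope R_scope.

Lemma ln_ge_iff (a b : R) : 0 < a -> 0 < b -> (ln a >= ln b <-> a >= b).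
Proof.
  intros Ha Hb; split; intro H.
  - destruct (Rge_dec a b) as [| Hlt]; [assumption |].
    assert (ln a < ln b) by (apply ln_increasing; lra); lra.
  - destruct (Req_dec a b) as [-> | Hneq]; [lra |].
    assert (ln b < ln a) by (apply ln_increasing; lra); lra.
Qed.

Lemma log2_ge_iff (a b : R) : 0 < a -> 0 < b -> (log2 a >= log2 b <-> a >= b).
Proof.
  intros Ha Hb; unfold log2, Rdiv.
  assert (Hinv : 0 < / ln 2)
    by (apply Rinv_0_lt_compat; rewrite <- ln_1; apply ln_increasing; lra).
  rewrite <- (ln_ge_iff a b Ha Hb).
  split; intro H; nra.
Qed.

Lemma Rmult_ge_iff_l (c x y : R) : 0 < c -> (c * x >= c * y <-> x >= y).
Proof. intro Hc; split; intro H; nra. Qed.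

Lemma mrc_sinr_gap (P d k : R) : 0 < P * k + 1 ->
  (1 + P * d) - (1 + P * (d + k) / (P * k + 1)) = P * k / (P * k + 1) * (P * d - 1).
Proof. intro Hden; field; lra. Qed.

Lemma Rge_inv_iff (P d : R) : 0 < d -> (P >= 1 / d <-> P * d >= 1).
Proof.
  intro Hd; rewrite <- (Rmult_ge_iff_l d) by assumption.
  replace (d * (1 / d)) with 1 by (field; lra); lra.
Qed.

Lemma zf_sinr_ge_mrc_sinr_iff (P d k : R) : 0 < P -> 0 < d -> 0 < k ->
  (1 + P * d >= 1 + P * (d + k) / (P * k + 1) <-> P >= 1 / d).
Proof.
  intros HP Hd Hk.
  assert (Hden : 0 < P * k + 1) by nra.
  assert (Hcoef : 0 < P * k / (P * k + 1)) by (apply Rdiv_lt_0_compat; nra).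
  pose proof (mrc_sinr_gap P d k Hden) as Hgap.
  rewrite Rge_inv_iff by assumption.
  split; intro H; nra.
Qed.

Theorem lemma7 (M K : nat) (Pu : R) :
  (2 <= K)%nat -> (K <= M)%nat -> 0 < Pu ->
  (R_ZF_UL M K Pu >= R_MRC_UL M K Pu <-> Pu >= P_th_UL M K).
Proof.
  intros HK HKM HP.
  apply le_INR in HK; apply le_INR in HKM; simpl in HK.
  unfold R_ZF_UL, R_MRC_UL, P_th_UL.
  set (d := INR M - INR K + 1); set (k := INR K - 1).
  assert (Hd : 0 < d) by (unfold d; lra).
  assert (Hk : 0 < k) by (unfold k; lra).
  replace (INR M) with (d + k) by (unfold d, k; lra).
  assert (Hzf : 0 < 1 + Pu * d) by nra.
  assert (Hmrc : 0 < 1 + Pu * (d + k) / (Pu * k + 1))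
    by (apply Rplus_lt_le_0_compat, Rlt_le, Rdiv_lt_0_compat; nra).
  rewrite Rmult_ge_iff_l, log2_ge_iff by lra.
  exact (zf_sinr_ge_mrc_sinr_iff Pu d k HP Hd Hk).
Qed.
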